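(* Under the hypotheses and notation of the following setting: $M_1,M_2$ are commuting $2$-qubit Hermitian unitaries whose joint $+1$ eigenspace is spanned by the unit vector $\ket\psi$; $M_0=I\otimes I$, $M_3=M_1M_2$; $M_j=I\otimes N_{j0}+X\otimes N_{j1}+Y\otimes N_{j2}+Z\otimes N_{j3}$; $c_j=\tfrac12\operatorname{tr}(N_{j3})$; $p_\pm=\frac{1\pm(c_1+c_2+c_3)}{2}$. For a $2\times 2$ matrix $A$ let $A^\circ=A-\tfrac12\operatorname{tr}(A)I$ denote its traceless part, and define $$M_+=\frac{1}{2p_+}\sum_{j=1}^3\big(N_{j0}+N_{j3}\big)^\circ\ (\text{if }p_+>0),\qquad M_-=\frac{1}{2p_-}\sum_{j=1}^3\big(N_{j0}-N_{j3}\big)^\circ\ (\text{if }p_->0).$$ Then if the first qubit of $\ket\psi$ is measured in the computational basis and outcome $+1$ occurs, the post-measurement state is $\ket0\otimes\ket{\phi_+}$ with $\ket{\phi_+}\bra{\phi_+}=\tfrac12(I+M_+)$; if outcome $-1$ occurs, the post-measurement state is $\ket1\otimes\ket{\phi_-}$ with $\ket{\phi_-}\bra{\phi_-}=\tfrac12(I+M_-)$. In particular $M_\pm$ are Hermitian unitaries having $\ket{\phi_\pm}$ as $+1$ eigenvector.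
   Context: $X,Y,Z$ are the Pauli matrices. The post-measurement state for outcome $+1$ is $(\ket0\bra0\otimes I)\ket\psi/\sqrt{p_+}$ and for outcome $-1$ is $(\ket1\bra1\otimes I)\ket\psi/\sqrt{p_-}$. *)

From HB Require Import structures.
From mathcomp Require Import all_boot all_order all_algebra.
From mathcomp Require Import mxtens.
Set Implicit Arguments. Unset Strict Implicit. Unset Printing Implicit Defensive.
Import Order.TTheory GRing.Theory Num.Theory.
Local Open Scope ring_scope.

Section Defs.
Variable C : numClosedFieldType.

Definition adj m n (A : 'M[C]_(m, n)) : 'M[C]_(n, m) := (map_mx Num.conj A)^T.

Definition qhermitian n (A : 'M[C]_n) : Prop := adj A = A.
Definition qunitary n (A : 'M[C]_n) : Prop := A *m adj A = 1%:M /\ adj A *m A = 1%:M.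

Definition pauliX : 'M[C]_2 := \matrix_(i < 2, j < 2)
  (if (i == 0 :> nat) && (j == 1 :> nat) then 1
   else if (i == 1 :> nat) && (j == 0 :> nat) then 1 else 0).
Definition pauliY : 'M[C]_2 := \matrix_(i < 2, j < 2)
  (if (i == 0 :> nat) && (j == 1 :> nat) then - 'i
   else if (i == 1 :> nat) && (j == 0 :> nat) then 'i else 0).
Definition pauliZ : 'M[C]_2 := \matrix_(i < 2, j < 2)
  (if (i == 0 :> nat) && (j == 0 :> nat) then 1
   else if (i == 1 :> nat) && (j == 1 :> nat) then -1 else 0).

Definition pauli_expand (N : nat -> 'M[C]_2) : 'M[C]_(2 * 2) :=
  (1%:M : 'M[C]_2) *t N 0%N + pauliX *t N 1%N + pauliY *t N 2%N + pauliZ *t N 3%N.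

Definition traceless (A : 'M[C]_2) : 'M[C]_2 := A - (\tr A / 2) *: 1%:M.

Definition ket0 : 'cV[C]_2 := delta_mx 0 0.
Definition ket1 : 'cV[C]_2 := delta_mx 1 0.

Definition proj0 : 'M[C]_(2 * 2) := (ket0 *m adj ket0) *t (1%:M : 'M[C]_2).
Definition proj1 : 'M[C]_(2 * 2) := (ket1 *m adj ket1) *t (1%:M : 'M[C]_2).
End Defs.

(* Then
       (1 + M1)(1 + M2) = 4 psi psi^*,                                  (P)
   since the left side is Hermitian, maps everything into that line and
   multiplies psi by 4.  Measuring the first qubit in the computational basis
   in outcome i keeps the i-th slice phi_i = (psi_{ik})_k of psi (tensored
   with |i>).  Writing Mj = I(x)Nj0 + X(x)Nj1 + Y(x)Nj2 + Z(x)Nj3, the i-th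
   diagonal 2x2 block of (P) reads
       4 phi_i phi_i^* = 1 + S0 + Z_ii S3,  S_a = N1a + N2a + N3a,
   because X and Y have zero diagonal.  Summing traces over i, and using
   |psi| = 1, forces tr S0 = 0; hence tr(1 + S0 +/- S3) = 4 p_+/-.  Finally a
   rank-one 2x2 matrix phi phi^* = (1 + M)/2 with tr M = 0 exhibits M as a
   Hermitian unitary with eigenvector phi. *)

From HB Require Import structures.
From mathcomp Require Import all_boot all_order all_algebra.
From mathcomp Require Import mxtens ring.
Set Implicit Arguments. Unset Strict Implicit. Unset Printing Implicit Defensive.
Import Order.TTheory GRing.Theory Num.Theory.
Local Open Scope ring_scope.

Section Adjoint.
Variable C : numClosedFieldType.

Lemma adjE m n (A : 'M[C]_(m, n)) i j : adj A i j = (A j i)^*.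
Proof. by rewrite /adj !mxE. Qed.

Lemma adjK m n (A : 'M[C]_(m, n)) : adj (adj A) = A.
Proof. by apply/matrixP=> i j; rewrite !adjE conjCK. Qed.

Lemma adjM m n p (A : 'M[C]_(m, n)) (B : 'M[C]_(n, p)) :
  adj (A *m B) = adj B *m adj A.
Proof.
apply/matrixP=> i j; rewrite adjE !mxE rmorph_sum; apply: eq_bigr => k _.
by rewrite rmorphM /= !adjE mulrC.
Qed.

Lemma adjD m n (A B : 'M[C]_(m, n)) : adj (A + B) = adj A + adj B.
Proof. by apply/matrixP=> i j; rewrite !mxE rmorphD. Qed.

Lemma adjN m n (A : 'M[C]_(m, n)) : adj (- A) = - adj A.
Proof. by apply/matrixP=> i j; rewrite !mxE rmorphN. Qed.

Lemma adjZ m n a (A : 'M[C]_(m, n)) : adj (a *: A) = a^* *: adj A.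
Proof. by apply/matrixP=> i j; rewrite !mxE rmorphM. Qed.

Lemma adj1 n : adj (1%:M : 'M[C]_n) = 1%:M.
Proof. by apply/matrixP=> i j; rewrite adjE !mxE eq_sym conjC_nat. Qed.

Lemma mx_ext m n (A B : 'M[C]_(m, n)) :
  (forall w : 'cV[C]_n, A *m w = B *m w) -> A = B.
Proof.
move=> AB; apply/matrixP=> i j.
by have := congr1 (fun v : 'cV[C]_m => v i 0) (AB (delta_mx j 0)); rewrite -!colE !mxE.
Qed.

End Adjoint.

Section JointEigenspace.
Variables (C : numClosedFieldType) (n : nat).
Variables (M1 M2 : 'M[C]_n) (psi : 'cV[C]_n).
Hypotheses (M1h : qhermitian M1) (M1u : qunitary M1).
Hypotheses (M2h : qhermitian M2) (M2u : qunitary M2).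
Hypothesis M12C : M1 *m M2 = M2 *m M1.
Hypothesis psi_unit : adj psi *m psi = 1%:M.
Hypothesis psi_span : forall v : 'cV[C]_n,
  (M1 *m v = v /\ M2 *m v = v) <-> exists a : C, v = a *: psi.

Lemma hermitian_unitary_fix (M : 'M[C]_n) :
  qhermitian M -> qunitary M -> M *m (1%:M + M) = 1%:M + M.
Proof. by move=> Mh [MM _]; rewrite Mh in MM; rewrite mulmxDr mulmx1 MM addrC. Qed.

Lemma span_psi_project (Q : 'M[C]_n) :
  (forall w, exists a, Q *m w = a *: psi) -> psi *m adj psi *m Q = Q.
Proof.
move=> Qw; apply: mx_ext => w; have [a Qa] := Qw w.
by rewrite -mulmxA Qa -mulmxA -scalemxAr psi_unit scalemx1 mul_mx_scalar.
Qed.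

Lemma joint_projector : (1%:M + M1) *m (1%:M + M2) = 4%:R *: (psi *m adj psi).
Proof.
set Q := (1%:M + M1) *m (1%:M + M2).
have M2C : M2 *m (1%:M + M1) = (1%:M + M1) *m M2.
  by rewrite mulmxDr mulmxDl mulmx1 mul1mx M12C.
have QM1 : M1 *m Q = Q by rewrite /Q mulmxA hermitian_unitary_fix.
have QM2 : M2 *m Q = Q by rewrite /Q mulmxA M2C -mulmxA hermitian_unitary_fix.
have Qproj : psi *m adj psi *m Q = Q.
  by apply: span_psi_project => w; apply/psi_span; rewrite (mulmxA M1) (mulmxA M2) QM1 QM2.
have Qh : adj Q = Q.
  rewrite /Q adjM !adjD adj1 M1h M2h [LHS]mulmxDl mul1mx M2C.
  by rewrite -[X in X + _]mulmx1 -mulmxDr.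
have [psiM1 psiM2] : M1 *m psi = psi /\ M2 *m psi = psi.
  by apply/psi_span; exists 1; rewrite scale1r.
have twice (M : 'M[C]_n) : M *m psi = psi -> (1%:M + M) *m psi = 2%:R *: psi.
  by move=> Mpsi; rewrite mulmxDl mul1mx Mpsi scaler_nat mulr2n.
have Qpsi : Q *m psi = 4%:R *: psi.
  by rewrite /Q -mulmxA twice // -scalemxAr twice // scalerA -natrM.
clearbody Q; by rewrite -Qh -Qproj !adjM adjK Qh mulmxA Qpsi -scalemxAl.
Qed.

End JointEigenspace.

(* A rank-one 2x2 matrix phi phi^* = (1 + M)/2 with tr M = 0 forces phi to be
   a unit vector, phi phi^* to be an orthogonal projector, and hence
   M = 2 phi phi^* - 1 to be a Hermitian unitary with M phi = phi. *)
Lemma qubit_pure_state (C : numClosedFieldType) (phi : 'cV[C]_2) (M : 'M[C]_2) :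
  phi *m adj phi = 2^-1 *: (1%:M + M) -> \tr M = 0 ->
  qhermitian M /\ qunitary M /\ M *m phi = phi.
Proof.
move=> phiM trM0; have two_neq0 : (2%:R : C) != 0 by rewrite pnatr_eq0.
set P := phi *m adj phi in phiM *.
have ME : M = 2%:R *: P - 1%:M.
  by rewrite phiM scalerA divff // scale1r addrC addKr.
have phi_unit : adj phi *m phi = 1%:M.
  rewrite [LHS]mx11_scalar -trace_mx11 mxtrace_mulC -/P phiM mxtraceZ.
  by rewrite mxtraceD trM0 addr0 mxtrace1 mulVf.
have PP : P *m P = P by rewrite /P mulmxA -(mulmxA phi) phi_unit mulmx1.
have Ph : adj P = P by rewrite /P adjM adjK.
have Mh : adj M = M by rewrite ME adjD adjN adjZ adj1 Ph conjC_nat.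
have MM : M *m M = 1%:M.
  rewrite {1}ME mulmxBl mul1mx -scalemxAl ME mulmxBr mulmx1 -scalemxAr PP.
  by rewrite !scaler_nat !mulr2n addrK opprB addrC subrK.
split=> //; split; first by rewrite /qunitary Mh MM.
rewrite ME mulmxBl mul1mx -scalemxAl /P -mulmxA phi_unit mulmx1.
by rewrite scaler_nat mulr2n addrK.
Qed.

Section TensorBlocks.
Variables (C : numClosedFieldType) (m n : nat).

Lemma sum_mxtens_index (F : 'I_(m * n) -> C) :
  \sum_(x < m * n) F x = \sum_(i < m) \sum_(k < n) F (mxtens_index (i, k)).
Proof.
rewrite (reindex (@mxtens_index m n)) /=; first by rewrite pair_big; apply: eq_bigr => -[].
by exists (@mxtens_unindex m n) => x _; [apply: mxtens_indexK | apply: mxtens_unindexK].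
Qed.

Lemma mxtens_index_eq (i i' : 'I_m) (k k' : 'I_n) :
  (mxtens_index (i, k) == mxtens_index (i', k')) = (i == i') && (k == k').
Proof. by rewrite (inj_eq (can_inj (@mxtens_indexK m n))) xpair_eqE. Qed.

Definition slice (v : 'cV[C]_(m * n)) (i : 'I_m) : 'cV[C]_n :=
  \col_k v (mxtens_index (i, k)) 0.

Definition dblock (A : 'M[C]_(m * n)) (i : 'I_m) : 'M[C]_n :=
  \matrix_(k, l) A (mxtens_index (i, k)) (mxtens_index (i, l)).

Lemma dblockD (A B : 'M[C]_(m * n)) i : dblock (A + B) i = dblock A i + dblock B i.
Proof. by apply/matrixP=> k l; rewrite !mxE. Qed.

Lemma dblockZ a (A : 'M[C]_(m * n)) i : dblock (a *: A) i = a *: dblock A i.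
Proof. by apply/matrixP=> k l; rewrite !mxE. Qed.

Lemma dblock1 i : dblock 1%:M i = 1%:M.
Proof. by apply/matrixP=> k l; rewrite !mxE mxtens_index_eq eqxx. Qed.

Lemma dblock_tens (A : 'M[C]_m) (B : 'M[C]_n) i : dblock (A *t B) i = A i i *: B.
Proof. by apply/matrixP=> k l; rewrite mxE tensmxE mxE. Qed.

Lemma dblock_outer (v : 'cV[C]_(m * n)) i :
  dblock (v *m adj v) i = slice v i *m adj (slice v i).
Proof. by apply/matrixP=> k l; rewrite !mxE !big_ord1 !adjE !mxE. Qed.

Lemma mxtrace_dblocks (A : 'M[C]_(m * n)) : \sum_i \tr (dblock A i) = \tr A.
Proof.
rewrite /mxtrace sum_mxtens_index; apply: eq_bigr => i _.
by apply: eq_bigr => k _; rewrite mxE.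
Qed.

Lemma tensZr p q r s a (A : 'M[C]_(p, q)) (B : 'M[C]_(r, s)) :
  a *: (A *t B) = A *t (a *: B).
Proof.
apply/matrixP=> x y.
case: (mxtens_indexP x) => i k; case: (mxtens_indexP y) => j l.
by rewrite mxE !tensmxE mxE mulrCA.
Qed.

Lemma project_first_factor (v : 'cV[C]_(m * n)) (i : 'I_m) :
  ((delta_mx i 0 *m adj (delta_mx i 0 : 'cV[C]_m)) *t (1%:M : 'M[C]_n)) *m v
  = (delta_mx i 0 : 'cV[C]_m) *t slice v i.
Proof.
apply/matrixP=> x y; case: (mxtens_indexP x) => a k; case: (@mxtens_indexP 1 1 y) => z w.
have entry b l : ((delta_mx i 0 *m adj (delta_mx i 0 : 'cV[C]_m)) *t 1%:M)
    (mxtens_index (a, k)) (mxtens_index (b, l)) = ((a == i) && (b == i) && (k == l))%:R.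
  rewrite tensmxE !mxE big_ord1 adjE !mxE eqxx !andbT rmorph_nat.
  by case: (a == i); case: (b == i); case: (k == l); rewrite ?mulr1 ?mulr0 ?mul0r.
rewrite [LHS]mxE sum_mxtens_index (bigD1 i) //= [X in _ + X]big1 ?addr0 => [|b /negPf bi]; last first.
  by apply: big1 => l _; rewrite entry bi andbF mul0r.
rewrite (bigD1 k) //= [X in _ + X]big1 ?addr0 => [|l /negPf kl]; last first.
  by rewrite entry (eq_sym k l) kl andbF mul0r.
rewrite entry (tensmxE (delta_mx i 0 : 'cV[C]_m) (slice v i) a k z w).
rewrite !mxE [z]ord1 [w]ord1 !eqxx !andbT.
by rewrite [mxtens_index (0, 0)]ord1.
Qed.

End TensorBlocks.

(* X and Y have vanishing diagonal, so the i-th diagonal block of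
   I(x)N0 + X(x)N1 + Y(x)N2 + Z(x)N3 is N0 + Z_ii N3. *)
Lemma dblock_pauli_expand (C : numClosedFieldType) (N : nat -> 'M[C]_2) (i : 'I_2) :
  dblock (pauli_expand N) i = N 0%N + pauliZ C i i *: N 3%N.
Proof.
rewrite /pauli_expand !dblockD !dblock_tens !mxE eqxx scale1r.
by case: i => -[|[|]] //= _; rewrite !scale0r !addr0.
Qed.

Lemma tracelessD (C : numClosedFieldType) (A B : 'M[C]_2) :
  traceless (A + B) = traceless A + traceless B.
Proof. by rewrite /traceless mxtraceD mulrDl scalerDl opprD addrACA. Qed.

Lemma conditional_state (C : numClosedFieldType) m (v : 'cV[C]_(m * 2))
    (i : 'I_m) (T : 'M[C]_2) (p : C) :
  0 < p -> 4%:R *: (slice v i *m adj (slice v i)) = 1%:M + T ->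
  \tr T = 2%:R * (2%:R * p - 1) ->
  let M := (2 * p)^-1 *: traceless T in
  exists phi : 'cV[C]_2,
    (sqrtC p)^-1 *: (((delta_mx i 0 *m adj (delta_mx i 0 : 'cV[C]_m))
                      *t (1%:M : 'M[C]_2)) *m v) = (delta_mx i 0 : 'cV[C]_m) *t phi
    /\ phi *m adj phi = 2^-1 *: (1%:M + M)
    /\ qhermitian M /\ qunitary M /\ M *m phi = phi.
Proof.
move=> p_gt0 slice_block trT M; set s := sqrtC p.
have sV_real : (s^-1)^* = s^-1 by rewrite conj_Creal // realV ger0_real // sqrtC_ge0 ltW.
have ss : s * s = p by rewrite -expr2 sqrtCK.
have p_neq0 : p != 0 by rewrite gt_eqF.
have slice_outer : slice v i *m adj (slice v i) = 4%:R^-1 *: (1%:M + T).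
  by rewrite -slice_block scalerA mulVf ?scale1r // pnatr_eq0.
exists (s^-1 *: slice v i).
have phi_outer : (s^-1 *: slice v i) *m adj (s^-1 *: slice v i) = 2^-1 *: (1%:M + M).
  rewrite adjZ sV_real -scalemxAl -scalemxAr scalerA -invfM ss slice_outer.
  apply/matrixP=> k l; rewrite /M /traceless trT !mxE.
  by field.
split; first by rewrite project_first_factor -tensZr.
split=> //; apply: qubit_pure_state phi_outer _.
by rewrite /M mxtraceZ /traceless raddfB /= mxtraceZ mxtrace1 divfK ?subrr ?mulr0 // pnatr_eq0.
Qed.

Section Measurement.
Variables (C : numClosedFieldType) (M1 M2 : 'M[C]_(2 * 2)) (psi : 'cV[C]_(2 * 2)).
Variables (N1 N2 N3 : nat -> 'M[C]_2).
Hypotheses (M1h : qhermitian M1) (M1u : qunitary M1).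
Hypotheses (M2h : qhermitian M2) (M2u : qunitary M2).
Hypothesis M12C : M1 *m M2 = M2 *m M1.
Hypothesis psi_unit : adj psi *m psi = 1%:M.
Hypothesis psi_span : forall v : 'cV[C]_(2 * 2),
  (M1 *m v = v /\ M2 *m v = v) <-> exists a : C, v = a *: psi.
Hypotheses (M1E : M1 = pauli_expand N1) (M2E : M2 = pauli_expand N2).
Hypothesis M3E : M1 *m M2 = pauli_expand N3.

Local Notation S0 := (N1 0%N + N2 0%N + N3 0%N).
Local Notation S3 := (N1 3%N + N2 3%N + N3 3%N).

Lemma slice_outer_block (i : 'I_2) :
  4%:R *: (slice psi i *m adj (slice psi i)) = 1%:M + S0 + pauliZ C i i *: S3.
Proof.
rewrite -dblock_outer -dblockZ -(joint_projector M1h M1u M2h M2u M12C psi_unit psi_span).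
rewrite mulmxDl mul1mx mulmxDr mulmx1 addrA M3E M1E M2E.
rewrite 3!dblockD dblock1 !dblock_pauli_expand.
by apply/matrixP=> k l; rewrite !mxE; ring.
Qed.

(* Summing the traces of both blocks against tr(psi psi^* ) = 1 shows that
   the identity components carry no trace. *)
Lemma identity_components_traceless : \tr S0 = 0.
Proof.
have tr_psi : \tr (psi *m adj psi) = 1 by rewrite mxtrace_mulC psi_unit mxtrace1.
have := congr1 (fun x => 4%:R * x) tr_psi.
rewrite -mxtrace_dblocks !big_ord_recl big_ord0 /= !mulrDr -!mxtraceZ.
rewrite !dblock_outer !slice_outer_block !mxtraceD !mxtraceZ !mxtrace1 !mxE /=.
set t := (X in X = 0) => tr_sum.
have : 2%:R * t = 0 by rewrite -(subrr (4%:R * 1 : C)) -{1}tr_sum /t; ring.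
by move/eqP; rewrite mulf_eq0 pnatr_eq0 => /eqP.
Qed.

End Measurement.

Theorem mainTheorem17 (C : numClosedFieldType)
  (M1 M2 : 'M[C]_(2 * 2)) (psi : 'cV[C]_(2 * 2))
  (N1 N2 N3 : nat -> 'M[C]_2) :
  qhermitian M1 -> qunitary M1 -> qhermitian M2 -> qunitary M2 ->
  M1 *m M2 = M2 *m M1 ->
  adj psi *m psi = 1%:M ->
  (forall v : 'cV[C]_(2 * 2),
      (M1 *m v = v /\ M2 *m v = v) <-> exists a : C, v = a *: psi) ->
  M1 = pauli_expand N1 -> M2 = pauli_expand N2 -> M1 *m M2 = pauli_expand N3 ->
  let c1 := \tr (N1 3%N) / 2 in
  let c2 := \tr (N2 3%N) / 2 in
  let c3 := \tr (N3 3%N) / 2 in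
  let pp := (1 + (c1 + c2 + c3)) / 2 in
  let pm := (1 - (c1 + c2 + c3)) / 2 in
  let Mp := (2 * pp)^-1 *: (traceless (N1 0%N + N1 3%N)
              + traceless (N2 0%N + N2 3%N) + traceless (N3 0%N + N3 3%N)) in
  let Mm := (2 * pm)^-1 *: (traceless (N1 0%N - N1 3%N)
              + traceless (N2 0%N - N2 3%N) + traceless (N3 0%N - N3 3%N)) in
  (0 < pp ->
     exists phi : 'cV[C]_2,
       (sqrtC pp)^-1 *: (proj0 C *m psi) = ket0 C *t phi
       /\ phi *m adj phi = 2^-1 *: (1%:M + Mp)
       /\ qhermitian Mp /\ qunitary Mp /\ Mp *m phi = phi)
  /\
  (0 < pm ->
     exists phi : 'cV[C]_2,
       (sqrtC pm)^-1 *: (proj1 C *m psi) = ket1 C *t phi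
       /\ phi *m adj phi = 2^-1 *: (1%:M + Mm)
       /\ qhermitian Mm /\ qunitary Mm /\ Mm *m phi = phi).
Proof.
move=> M1h M1u M2h M2u M12C psi_unit psi_span M1E M2E M3E c1 c2 c3 pp pm Mp Mm.
have block := slice_outer_block M1h M1u M2h M2u M12C psi_unit psi_span M1E M2E M3E.
have trS0 := identity_components_traceless M1h M1u M2h M2u M12C psi_unit psi_span M1E M2E M3E.
move/eqP: trS0; rewrite !mxtraceD addrC addr_eq0 => /eqP trN30.
split=> p_gt0; rewrite /Mp /Mm -!tracelessD; apply: conditional_state p_gt0 _ _.
- by rewrite block; apply/matrixP=> k l; rewrite !mxE /=; ring.
- by rewrite !mxtraceD trN30 /pp /c1 /c2 /c3; field.
- by rewrite block; apply/matrixP=> k l; rewrite !mxE /=; ring.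
- by rewrite !mxtraceD !raddfN /= trN30 /pm /c1 /c2 /c3; field.
Qed.
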